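(* Let $F\in\mathfrak{E}$ have degree $j$ with homogeneous decomposition $F=f_j+f_{j-1}+\cdots+f_{j-a}+\cdots$, where $f_i\in\mathfrak{D}$ for $j\ge i>j-a$ and $f_{j-a}\in\mathfrak{E}$. Let $A=S/\operatorname{Ann}_S F$, and suppose that $H_A(a)_1=H_A(a)_{j-a-1}\neq 0$ and that $H_A(a)_u=0$ for some $u\in[2,j-a-2]$. Then $f_{j-a}$ is linear in $Z_1,\ldots,Z_s$ (every monomial of $f_{j-a}$ has degree at most one in $Z_1,\ldots,Z_s$).
   Context: Let $\mathsf{k}$ be a field, $R=\mathsf{k}\{x_1,\ldots,x_r\}$, $S=\mathsf{k}\{x_1,\ldots,x_r,z_1,\ldots,z_s\}$, $\mathfrak{D}=\mathsf{k}_{DP}[X_1,\ldots,X_r]\subset\mathfrak{E}=\mathsf{k}_{DP}[X_1,\ldots,X_r,Z_1,\ldots,Z_s]$ divided power algebras with $S$ acting on $\mathfrak{E}$ by contraction ($x^{\alpha}\circ X^{[\beta]}=X^{[\beta-\alpha]}$ if $\beta\ge\alpha$ componentwise, $0$ otherwise). For $F\in\mathfrak{E}$ of degree $j$, $A=S/\operatorname{Ann}_S F$ is Artinian Gorenstein of socle degree $j$ with maximal ideal $\mathfrak{m}_A$; $C_A(a)$ is the ideal of $A^*=\bigoplus_i\mathfrak{m}_A^i/\mathfrak{m}_A^{i+1}$ whose degree-$i$ part is the image of $\mathfrak{m}_A^i\cap(0:\mathfrak{m}_A^{\,j+1-a-i})$, $Q_A(a)=C_A(a)/C_A(a+1)$,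 and $H_A(a)_i=\dim_{\mathsf{k}}Q_A(a)_i$. *)

From HB Require Import structures.
From mathcomp Require Import all_boot all_order all_algebra.
From mathcomp Require Import mpoly.
From Stdlib Require Import ClassicalEpsilon.

Set Implicit Arguments.
Unset Strict Implicit.
Unset Printing Implicit Defensive.
Import Order.TTheory GRing.Theory.
Local Open Scope ring_scope.

(* Conventions.  n = r + s variables; variable i : 'I_(r+s) is x_(i+1)
   (resp. X_(i+1)) when i < r and z_(i-r+1) (resp. Z_(i-r+1)) when r <= i.

   * The divided power algebra E = k_DP[X,Z] is represented, as a k-vector
     space, by {mpoly k[r+s]}: the polynomial sum_b c_b 'X_[b] stands for
     sum_b c_b X^[b] (divided power monomials).  Only the vector space
     structure and the contraction action are used, so the divided power
     multiplication is never needed.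
   * The ring S acting on E is represented by the polynomial ring
     {mpoly k[r+s]} (since m^(j+1) F = 0, the quotient
     S / Ann_S F is the same for the power series ring and for the
     polynomial ring). *)

Section Defs.
Variables (k : fieldType) (r s : nat).
Local Notation n := (r + s)%N.
Local Notation P := {mpoly k[n]}.

Definition contract (g F : P) : P :=
  \sum_(a <- msupp g) \sum_(b <- msupp F)
     (if (a <= b)%MM then (g@_a * F@_b) *: 'X_[b - a] else 0).

Definition hcomp (i : nat) (F : P) : P :=
  \sum_(b <- msupp F | mdeg b == i) F@_b *: 'X_[b].

Definition zdeg (b : 'X_{1..n}) : nat := \sum_(i < n | (r <= i)%N) b i.

Definition in_D (F : P) : Prop := forall b, b \in msupp F -> zdeg b = 0%N.

Definition Z_linear (F : P) : Prop := forall b, b \in msupp F -> (zdeg b <= 1)%N.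

Definition has_degree (F : P) (j : nat) : Prop := msize F = j.+1.

Definition Ann (F : P) : P -> Prop := fun g => contract g F = 0.

Definition mpow (i : nat) : P -> Prop :=
  fun g => forall b, b \in msupp g -> (i <= mdeg b)%N.

Definition sumsp (U V : P -> Prop) : P -> Prop :=
  fun g => exists u v, U u /\ V v /\ g = u + v.

Definition colon (I J : P -> Prop) : P -> Prop :=
  fun g => forall h, J h -> I (g * h).

(* dim_k (U / V) = d, for subspaces V <= U *)
Definition qdim_is (U V : P -> Prop) (d : nat) : Prop :=
  exists v : 'I_d -> P,
    (forall t, U (v t)) /\
    (forall c : 'I_d -> k, V (\sum_t c t *: v t) -> forall t, c t = 0) /\
    (forall g, U g -> exists c : 'I_d -> k, V (g - \sum_t c t *: v t)).

Definition qdim (U V : P -> Prop) : nat :=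
  epsilon (inhabits 0%N) (fun d => qdim_is U V d).

(* A = S / Ann_S F, m_A its maximal ideal.  Lifted to S, the ideal
   m_A^i /\ (0 : m_A^(j+1-a-i)) of A is
     Cl a i := (m^i + Ann F) /\ (Ann F : m^(j+1-a-i)),
   and C_A(a)_i = (Cl a i + m^(i+1) + Ann F) / (m^(i+1) + Ann F),
   a subspace of m_A^i / m_A^(i+1) = (m^i + Ann F)/(m^(i+1) + Ann F). *)
Definition Clift (F : P) (j a i : nat) : P -> Prop :=
  fun g => sumsp (mpow i) (Ann F) g /\ colon (Ann F) (mpow (j.+1 - a - i)) g.

Definition Cnum (F : P) (j a i : nat) : P -> Prop :=
  sumsp (Clift F j a i) (sumsp (mpow i.+1) (Ann F)).

(* H_A(a)_i = dim_k Q_A(a)_i = dim_k C_A(a)_i / C_A(a+1)_i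
           = dim_k (Cnum a i) / (Cnum (a+1) i) *)
Definition HA (F : P) (j a i : nat) : nat :=
  qdim (Cnum F j a i) (Cnum F j a.+1 i).

End Defs.

Arguments in_D {k} r {s} F.
Arguments Z_linear {k} r {s} F.

From HB Require Import structures.
From mathcomp Require Import all_boot all_order all_algebra.
From mathcomp Require Import mpoly ssrcomplements zify.
From Stdlib Require Import ClassicalEpsilon Classical.

(* Suppose a monomial X^w of f_(j-a) has degree >= 2 in the Z's, and split
   w = E + mu with deg E = u and both E and mu involving some Z.  As the f_i
   with i > j - a lie in D, contracting F by a monomial of degree > j - a that
   involves a z gives 0; hence x^E * m^(j+1-a-u) annihilates F, i.e. the class of
   x^E lies in C_A(a)_u.  Contracting F by x^E x^mu instead yields the nonzero
   coefficient of X^w, and this keeps x^E out of C_A(a+1)_u + m^(u+1) + Ann F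
   (the factor x^mu pushes the m^(u+1) part into degree > j - a).  So
   Q_A(a)_u <> 0, against H_A(a)_u = 0.  As H_A is a dimension chosen by choice, H_A(a)_u = 0 only says
   C_A(a)_u = C_A(a+1)_u once that quotient is known to be finite dimensional,
   which holds because it is taken modulo m^(u+1). *)

Set Implicit Arguments.
Unset Strict Implicit.
Unset Printing Implicit Defensive.
Import Order.TTheory GRing.Theory.
Local Open Scope ring_scope.

Section MonomialSums.
Variables (k : fieldType) (n : nat).

Lemma big_msuppE (V : lmodType k) (phi : 'X_{1..n} -> V) g N :
  (msize g <= N)%N ->
  \sum_(a <- msupp g) g@_a *: phi a = \sum_(a : 'X_{1..n < N}) g@_a *: phi a.
Proof.
move=> le_gN; rewrite (big_mksub 'X_{1..n < N}) ?msupp_uniq //=; last first.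
  by move=> a /msize_mdeg_lt /leq_trans; apply.
rewrite big_rmcond //= => a /memN_msupp_eq0 ->.
by rewrite scale0r.
Qed.

Lemma big_msupp_linear (V : lmodType k) (phi : 'X_{1..n} -> V) :
  linear (fun g => \sum_(a <- msupp g) g@_a *: phi a).
Proof.
move=> x g h /=; set N := (msize g + msize h + msize (x *: g + h))%N.
rewrite !(@big_msuppE _ _ _ N) ?leq_addl //; try by rewrite /N; lia.
rewrite scaler_sumr -big_split; apply: eq_bigr => a _ /=.
by rewrite mcoeffD mcoeffZ scalerDl scalerA.
Qed.

End MonomialSums.

Section Multinomials.
Variable n : nat.
Implicit Types (v w : 'X_{1..n}).

Lemma mnm_splitU v (t : 'I_n) : (0 < v t)%N -> v = (U_(t) + (v - U_(t)))%MM.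
Proof.
move=> vt; rewrite addmC submK //; apply/mnm_lepP => i; rewrite mnm1E.
by case: eqP => [<-|].
Qed.

Lemma mnm_split_mdeg i v : (i <= mdeg v)%N ->
  exists v1 v2, v = (v1 + v2)%MM /\ mdeg v1 = i.
Proof.
elim: i v => [|i IHi] v le_iv; first by exists 0%MM, v; rewrite add0m mdeg0.
have [t vt] : exists t, (0 < v t)%N.
  apply/existsP; apply: contraTT le_iv => /existsPn v0.
  by rewrite -ltnNge mdegE big1 // => t _; apply/eqP; rewrite -leqn0 leqNgt v0.
have [|v1 [v2 [Ev dv1]]] := IHi (v - U_(t))%MM.
  by move: le_iv; rewrite {1}(mnm_splitU vt) mdegD mdeg1.
exists (U_(t) + v1)%MM, v2; split; last by rewrite mdegD mdeg1 dv1.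
by rewrite {1}(mnm_splitU vt) Ev addmA.
Qed.

End Multinomials.

Section Contraction.
Variables (k : fieldType) (r s : nat).
Local Notation n := (r + s)%N.
Implicit Types (g h F : {mpoly k[n]}) (a b c : 'X_{1..n}).

Definition contractX a F : {mpoly k[n]} :=
  \sum_(b <- msupp F) (if (a <= b)%MM then F@_b *: 'X_[b - a] else 0).

Lemma contractE g F : contract g F = \sum_(a <- msupp g) g@_a *: contractX a F.
Proof.
apply: eq_bigr => a _; rewrite scaler_sumr; apply: eq_bigr => b _.
by case: ifP; rewrite ?scaler0 ?scalerA.
Qed.

Lemma contractP F x g h :
  contract (x *: g + h) F = x *: contract g F + contract h F.
Proof. by rewrite !contractE (big_msupp_linear (contractX^~ F)). Qed.

Lemma contract0 F : contract 0 F = 0.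
Proof. by rewrite contractE msupp0 big_nil. Qed.

Lemma contractZ F x g : contract (x *: g) F = x *: contract g F.
Proof. by rewrite -[x *: g]addr0 contractP contract0 addr0. Qed.

Lemma contractD F g h : contract (g + h) F = contract g F + contract h F.
Proof. by have := contractP F 1 g h; rewrite !scale1r. Qed.

Lemma contractB F g h : contract (g - h) F = contract g F - contract h F.
Proof.
by have := contractP F (-1) h g; rewrite !scaleN1r addrC => ->; rewrite addrC.
Qed.

Lemma mcoeff_contractX a F c : (contractX a F)@_c = F@_(a + c).
Proof.
rewrite /contractX [F in RHS]mpolyE !raddf_sum /=; apply: eq_bigr => b _.
rewrite mcoeffZ mcoeffX; case: ifP => [le_ab|le_ab].
  by rewrite mcoeffZ mcoeffX -(eqm_add2r a) submK // addmC.
by rewrite mcoeff0; case: eqP le_ab => [->|_ _]; rewrite ?lem_addr ?mulr0.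
Qed.

Lemma mcoeff_contract g F c :
  (contract g F)@_c = \sum_(a <- msupp g) g@_a * F@_(a + c).
Proof.
rewrite contractE raddf_sum /=; apply: eq_bigr => a _.
by rewrite mcoeffZ mcoeff_contractX.
Qed.

Lemma mcoeff_contractMX g b F c :
  (contract (g * 'X_[b]) F)@_c = (contract g F)@_(b + c).
Proof.
rewrite !mcoeff_contract (perm_big _ (msuppMX g b)) big_map /=.
by apply: eq_bigr => a _; rewrite mcoeffMX addmA [(b + a)%MM]addmC.
Qed.

Lemma contract_eq0 g F :
  (forall a c, a \in msupp g -> F@_(a + c) = 0) -> contract g F = 0.
Proof.
move=> gF0; apply/mpolyP => c; rewrite mcoeff_contract mcoeff0.
by rewrite big1_seq // => a /andP[_ /gF0 ->]; rewrite mulr0.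
Qed.

End Contraction.

Section ZDegree.
Variables (r s : nat).
Local Notation n := (r + s)%N.
Local Notation zdeg := (@zdeg r s).
Implicit Types (v w : 'X_{1..n}).

Lemma zdegD v w : zdeg (v + w)%MM = (zdeg v + zdeg w)%N.
Proof. by rewrite /zdeg -big_split; apply: eq_bigr => i _; rewrite mnmDE. Qed.

Lemma zdegU (t : 'I_n) : (r <= t)%N -> zdeg U_(t)%MM = 1%N.
Proof.
move=> rt; rewrite /zdeg (bigD1 t) //= mnm1E eqxx big1 // => i /andP[_ ne].
by rewrite mnm1E eq_sym (negbTE ne).
Qed.

Lemma zdeg_le_mdeg v : (zdeg v <= mdeg v)%N.
Proof.
by rewrite /zdeg mdegE big_mkcond leq_sum // => i _; case: ifP.
Qed.

Lemma zdeg_gt0_split v : (0 < zdeg v)%N ->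
  exists t : 'I_n, [/\ (r <= t)%N, v = (U_(t) + (v - U_(t)))%MM
                    & zdeg (v - U_(t))%MM = (zdeg v).-1].
Proof.
move=> zv; have [t /andP[rt vt]] : exists t : 'I_n, (r <= t)%N && (0 < v t)%N.
  apply/existsP; apply: contraTT zv => /existsPn v0.
  rewrite -leqNgt leqn0 /zdeg; apply/eqP/big1 => t rt.
  by apply/eqP; rewrite -leqn0 leqNgt; move: (v0 t); rewrite rt.
exists t; split=> //; first exact: mnm_splitU.
by rewrite {2}(mnm_splitU vt) zdegD zdegU.
Qed.

Lemma mnm_split_zdeg w u : (1 < zdeg w)%N -> (0 < u < mdeg w)%N ->
  exists E mu, [/\ w = (E + mu)%MM, mdeg E = u, (0 < zdeg E)%N & (0 < zdeg mu)%N].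
Proof.
move=> zw /andP[u0 uw].
have [t [rt Ew zw1]] := zdeg_gt0_split (ltnW zw).
set w1 := (w - U_(t))%MM in Ew zw1.
have [|t' [rt' Ew1 _]] := zdeg_gt0_split (v := w1); first by rewrite zw1; lia.
set w2 := (w1 - U_(t'))%MM in Ew1.
have [|e [e' [Ew2 de]]] := @mnm_split_mdeg _ u.-1 w2.
  by move: uw; rewrite Ew Ew1 !mdegD !mdeg1; lia.
exists (U_(t) + e)%MM, (U_(t') + e')%MM; split.
- by rewrite Ew Ew1 Ew2; apply/mnmP => i; rewrite !mnmDE; lia.
- by rewrite mdegD mdeg1 de; lia.
- by rewrite zdegD zdegU.
- by rewrite zdegD zdegU.
Qed.

End ZDegree.

Section HomogeneousComponents.
Variables (k : fieldType) (r s : nat).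
Local Notation n := (r + s)%N.
Implicit Types (F : {mpoly k[n]}) (b : 'X_{1..n}).

Lemma mcoeff_hcomp i F b : (hcomp i F)@_b = if mdeg b == i then F@_b else 0.
Proof.
rewrite /hcomp raddf_sum big_mkcond /=.
transitivity (\sum_(c <- msupp F) if mdeg b == i then (F@_c *: 'X_[c])@_b else 0).
  apply: eq_bigr => c _; rewrite mcoeffZ mcoeffX.
  by case: (eqVneq c b) => [->|_]; rewrite ?mulr0 ?if_same.
case: ifP => _; last by rewrite big1.
by rewrite [F in RHS]mpolyE raddf_sum.
Qed.

Lemma msupp_hcomp i F b :
  (b \in msupp (hcomp i F)) = (mdeg b == i) && (b \in msupp F).
Proof. by rewrite !mcoeff_msupp mcoeff_hcomp; case: ifP; rewrite ?eqxx. Qed.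

End HomogeneousComponents.

Section Truncation.
Variables (k : fieldType) (r s N : nat).
Local Notation n := (r + s)%N.
Local Notation P := {mpoly k[n]}.
Local Notation M := #|{: 'X_{1..n < N}}|.

Definition mtrunc (g : P) : 'rV[k]_M :=
  \row_(l < M) g@_(enum_val l : 'X_{1..n < N}).

Lemma mtrunc_is_linear : linear mtrunc.
Proof. by move=> x g h; apply/rowP => l; rewrite !mxE mcoeffD mcoeffZ. Qed.

HB.instance Definition _ :=
  GRing.isLinear.Build k P 'rV[k]_M _ mtrunc mtrunc_is_linear.

Lemma mtrunc_eq0 (g : P) : mtrunc g = 0 -> mpow N g.
Proof.
move=> g0 b; rewrite mcoeff_msupp leqNgt; apply: contraNN => lt_bN.
have := congr1 (fun v : 'rV_M => v 0 (enum_rank (BMultinom lt_bN))) g0.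
by rewrite !mxE enum_rankK => ->.
Qed.

Lemma mpow_dependent d (v : 'I_d -> P) : (M < d)%N ->
  exists c : 'I_d -> k, (exists t, c t != 0) /\ mpow N (\sum_t c t *: v t).
Proof.
move=> lt_Md; pose A := \matrix_(t < d) mtrunc (v t).
have : kermx A != 0.
  by rewrite kermx_eq0 /row_free neq_ltn (leq_ltn_trans (rank_leq_col A) lt_Md).
case/rowV0Pn => c /sub_kermxP cA c0; exists (c 0); split.
  apply: NNPP => c_eq0; apply: (negP c0); apply/eqP/rowP => t.
  by rewrite mxE; apply: NNPP => ct; apply: c_eq0; exists t; apply/eqP.
apply: mtrunc_eq0; rewrite linear_sum -[RHS]cA mulmx_sum_row.
by apply: eq_bigr => t _; rewrite linearZ rowK.
Qed.

End Truncation.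

Definition scale_closed (k : fieldType) (V : lmodType k) (W : V -> Prop) :=
  forall x g, W g -> W (x *: g).

Definition ord_cons (T : Type) d (x : T) (f : 'I_d -> T) (t : 'I_d.+1) : T :=
  if unlift ord0 t is Some t' then f t' else x.

Section QuotientDimension.
Variables (k : fieldType) (r s N : nat).
Local Notation n := (r + s)%N.
Local Notation P := {mpoly k[n]}.
Variables (U V : P -> Prop).

Definition indep_mod d (v : 'I_d -> P) :=
  forall c : 'I_d -> k, V (\sum_t c t *: v t) -> forall t, c t = 0.

Hypothesis V_scale : scale_closed V.
Hypothesis mpow_V : forall g, mpow N g -> V g.

Lemma indep_mod_bound d (v : 'I_d -> P) :
  indep_mod v -> (d <= #|{: 'X_{1..n < N}}|)%N.
Proof.
move=> v_indep; rewrite leqNgt; apply/negP => /(mpow_dependent v).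
by case=> c [[t /negPf ct] /mpow_V /v_indep/(_ t)/eqP]; rewrite ct.
Qed.

Lemma indep_mod_cons d (v : 'I_d -> P) g :
  indep_mod v -> (forall c : 'I_d -> k, ~ V (g - \sum_t c t *: v t)) ->
  indep_mod (ord_cons g v).
Proof.
move=> v_indep g_indep c; rewrite big_ord_recl /ord_cons unlift_none.
under eq_bigr => t _ do rewrite liftK.
have [c0|c0 Vc] := eqVneq (c ord0) 0; last first.
  case: (g_indep (fun t => - ((c ord0)^-1 * c (lift ord0 t)))).
  have := V_scale (c ord0)^-1 Vc; rewrite scalerDr scalerA mulVf // scale1r.
  rewrite scaler_sumr -sumrN; congr (V (_ + _)); apply: eq_bigr => t _.
  by rewrite scalerA scaleNr opprK.
rewrite c0 scale0r add0r => /v_indep c_lift0 t.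
by case: (unliftP ord0 t) => [t' ->|->].
Qed.

Lemma qdim_is_exists : exists d, qdim_is U V d.
Proof.
apply: NNPP => no_dim.
have indep_fam d : exists v : 'I_d -> P, (forall t, U (v t)) /\ indep_mod v.
  elim: d => [|d [v [Uv v_indep]]]; first by exists (fun=> 0); split=> [[]|c _ []].
  have [g [Ug g_indep]] : exists g, U g /\ forall c, ~ V (g - \sum_t c t *: v t).
    apply: NNPP => span; apply: no_dim; exists d, v; do 2!split=> //.
    move=> g Ug; apply: NNPP => g_out; apply: span; exists g; split=> // c Vg.
    by apply: g_out; exists c.
  exists (ord_cons g v); split; last exact: indep_mod_cons.
  by move=> t; rewrite /ord_cons; case: unlift.
have [v [_ /indep_mod_bound]] := indep_fam #|{: 'X_{1..n < N}}|.+1.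
by rewrite ltnn.
Qed.

Lemma qdim_eq0 : qdim U V = 0%N -> forall g, U g -> V g.
Proof.
move=> dim0 g Ug; have : qdim_is U V (qdim U V).
  by apply: epsilon_spec; exact: qdim_is_exists.
rewrite dim0 => -[v [_ [_ /(_ g Ug) [c]]]].
by rewrite big_ord0 subr0.
Qed.

End QuotientDimension.

Section Ideals.
Variables (k : fieldType) (r s : nat).
Local Notation n := (r + s)%N.
Local Notation P := {mpoly k[n]}.
Implicit Types (F g h : P).

Lemma mpow0 i : mpow i (0 : P).
Proof. by move=> b; rewrite msupp0. Qed.

Lemma mpowZ i : scale_closed (@mpow k r s i).
Proof. by move=> x g gi b /msuppZ_le /gi. Qed.

Lemma mpowX i b : (i <= mdeg b)%N -> mpow i ('X_[b] : P).
Proof. by move=> le_ib b'; rewrite msuppX inE => /eqP ->. Qed.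

Lemma Ann0 F : Ann F 0.
Proof. exact: contract0. Qed.

Lemma AnnZ F : scale_closed (Ann F).
Proof. by move=> x g; rewrite /Ann contractZ => ->; rewrite scaler0. Qed.

Lemma sumspZ (W1 W2 : P -> Prop) :
  scale_closed W1 -> scale_closed W2 -> scale_closed (sumsp W1 W2).
Proof.
move=> W1Z W2Z x _ [g [h [W1g [W2h ->]]]].
exists (x *: g), (x *: h); rewrite scalerDr.
by split; [exact: W1Z|split; [exact: W2Z|]].
Qed.

Lemma sumspl (W1 W2 : P -> Prop) g : W1 g -> W2 0 -> sumsp W1 W2 g.
Proof. by move=> W1g W20; exists g, 0; rewrite addr0. Qed.

Lemma sumspr (W1 W2 : P -> Prop) g : W1 0 -> W2 g -> sumsp W1 W2 g.
Proof. by move=> W10 W2g; exists 0, g; rewrite add0r. Qed.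

Lemma colonZ F (W : P -> Prop) : scale_closed (colon (Ann F) W).
Proof. by move=> x g Fg h Wh; rewrite -scalerAl; apply/AnnZ/Fg. Qed.

Lemma CnumZ F j a i : scale_closed (Cnum F j a i).
Proof.
apply/sumspZ/sumspZ/AnnZ/mpowZ => x g [Ig Cg].
by split; [exact: (sumspZ (@mpowZ i) (@AnnZ F))|exact: colonZ].
Qed.

Lemma Clift0 F j a i : Clift F j a i 0.
Proof.
split; first exact/sumspl/Ann0/mpow0.
by move=> h _; rewrite mul0r; exact: Ann0.
Qed.

Lemma mpow_Cnum F j a i g : mpow i.+1 g -> Cnum F j a i g.
Proof. by move=> gi; apply/sumspr/sumspl/Ann0 => //; exact: Clift0. Qed.

End Ideals.

Lemma high_zdeg_mcoeff_eq0 (k : fieldType) (r s : nat) (F : {mpoly k[r + s]})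
    (j a : nat) :
  has_degree F j -> (forall i, (j - a < i <= j)%N -> in_D r (hcomp i F)) ->
  forall b, (j - a < mdeg b)%N -> (0 < zdeg b)%N -> F@_b = 0.
Proof.
move=> degF F_D b lt_b zb; apply/eqP; rewrite mcoeff_eq0; apply: contraTN zb => bF.
have le_bj : (mdeg b <= j)%N by rewrite -ltnS -degF msize_mdeg_lt.
by rewrite -eqn0Ngt (F_D (mdeg b)) ?lt_b // msupp_hcomp eqxx.
Qed.

Section TopComponents.
Variables (k : fieldType) (r s : nat) (F : {mpoly k[r + s]}) (j a : nat).
Local Notation zdeg := (@zdeg r s).
Hypothesis F_high : forall b, (j - a < mdeg b)%N -> (0 < zdeg b)%N -> F@_b = 0.

Lemma contractMX_eq0 h G x :
  mpow x h -> (j - a < x + mdeg G)%N -> (0 < zdeg G)%N ->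
  contract (h * 'X_[G]) F = 0.
Proof.
move=> hx lt_xG zG; apply: contract_eq0 => b' c.
rewrite (perm_mem (msuppMX h G)) => /mapP[b hb ->]; apply: F_high.
  by move: (hx b hb); rewrite !mdegD; lia.
by rewrite !zdegD; lia.
Qed.

Lemma X_in_Cnum E : (0 < zdeg E)%N -> Cnum F j a (mdeg E) 'X_[E].
Proof.
move=> zE; have mE := leq_trans zE (zdeg_le_mdeg E).
apply/sumspl; last exact/sumspl/Ann0/mpow0.
split; first exact/sumspl/Ann0/mpowX.
by move=> h hx; rewrite /Ann mulrC; apply: contractMX_eq0 hx _ zE; lia.
Qed.

Lemma X_notin_Cnum_succ E mu :
  F@_(E + mu) != 0 -> (0 < zdeg mu)%N -> (mdeg E + mdeg mu = j - a)%N ->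
  ~ Cnum F j a.+1 (mdeg E) 'X_[E].
Proof.
move=> Fw zmu dw [g [_ [[_ g_colon] [[h [an [hE [Fan ->]]]] XE]]]].
have : contract (g * 'X_[mu]) F = 0 by apply/g_colon/mpowX; lia.
have -> : g = 'X_[E] - (h + an) by rewrite XE addrK.
rewrite mulrBl mulrDl contractB contractD => /(congr1 (mcoeff 0%MM)).
rewrite (contractMX_eq0 hE) ?mcoeffB ?mcoeffD ?mcoeff_contractMX ?Fan; try lia.
rewrite mcoeff_contract msuppX big_seq1 mcoeffX eqxx mul1r addm0 !mcoeff0.
by rewrite !add0r subr0 => Fw0; rewrite Fw0 eqxx in Fw.
Qed.

End TopComponents.

Theorem lemma1p40 (k : fieldType) (r s : nat) (F : {mpoly k[r + s]})
    (j a u : nat) :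
  has_degree F j ->
  (forall i : nat, (j - a < i <= j)%N -> in_D r (hcomp i F)) ->
  HA F j a 1 = HA F j a (j - a - 1) ->
  HA F j a 1 <> 0%N ->
  (2 <= u <= j - a - 2)%N ->
  HA F j a u = 0%N ->
  Z_linear r (hcomp (j - a) F).
Proof.
move=> degF F_D _ _ /andP[u2 uja] HAu0 w.
rewrite msupp_hcomp => /andP[/eqP dw wF]; rewrite leqNgt; apply/negP => zw.
have [|E [mu [Ew dE zE zmu]]] := mnm_split_zdeg (u := u) zw.
  by rewrite dw; lia.
have F_high := high_zdeg_mcoeff_eq0 degF F_D.
apply: (X_notin_Cnum_succ F_high (E := E) (mu := mu)) => //.
- by rewrite -mcoeff_msupp -Ew.
- by rewrite -mdegD -Ew.
apply: (qdim_eq0 (N := (mdeg E).+1)) (X_in_Cnum F_high zE).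
- exact: CnumZ.
- exact: mpow_Cnum.
- by rewrite dE.
Qed.
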